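(* Let $A$ be a ring and $M$ a left $A$-module, and assume that the trace functor $\mathcal T^M$ is exact. Let $0\to K\to X\to N\to 0$ be an exact sequence of left $A$-modules such that $N\in\sigma[M]$ and $K$ is superfluous in $X$. Then $X\in\sigma[M]$. In other words, $\sigma[M]$ is closed under superfluous epimorphisms in ${}_A\mathcal M$.
   Context: For a left $A$-module $M$, $\sigma[M]$ denotes the full subcategory of the category ${}_A\mathcal M$ of left $A$-modules consisting of the modules subgenerated by $M$, i.e. submodules of epimorphic images of direct sums $M^{(I)}$; it is closed under submodules, quotients and direct sums. The trace functor $\mathcal T^M:{}_A\mathcal M\to\sigma[M]$ is given by $\mathcal T^M(N)=\sum\{f(X)\mid X\in\sigma[M],\ f\in{}_A\mathrm{Hom}(X,N)\}$, equivalently the sum of all submodules of $N$ lying in $\sigma[M]$, i.e. the largest submodule of $N$ belonging to $\sigma[M]$; it is right adjoint to the inclusion $\sigma[M]\to{}_A\mathcal M$ and left exact. A submodule $K\subseteq X$ is superfluous (small), written $K\ll X$, if for every submodule $L\subseteq X$, $K+L=X$ implies $L=X$. *)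

From HB Require Import structures.
From mathcomp Require Import all_boot all_order all_algebra.
Set Implicit Arguments. Unset Strict Implicit. Unset Printing Implicit Defensive.
Import GRing.Theory.
Local Open Scope ring_scope.

(* Left A-modules are modelled by [lmodType A] for a ring [A : pzRingType].
   Submodules of a module X are predicates [P : X -> Prop] closed under the
   module operations. *)

Definition is_lin (A : pzRingType) (X Y : lmodType A) (f : X -> Y) : Prop :=
  forall (a : A) (x y : X), f (a *: x + y) = a *: f x + f y.

Definition is_submod (A : pzRingType) (X : lmodType A) (P : X -> Prop) : Prop :=
  P 0 /\ (forall (a : A) (x y : X), P x -> P y -> P (a *: x + y)).

(* Y is an epimorphic image of a direct sum M^(I): there is a family of
   linear maps g_i : M -> Y (i.e. a linear map M^(I) -> Y, by the universal
   property of the direct sum) which is surjective, i.e. every y is a finite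
   sum of elements g_i(m_i). *)
Definition epi_image_of_sum (A : pzRingType) (M Y : lmodType A) : Prop :=
  exists (I : Type) (g : I -> M -> Y),
    (forall i, is_lin (g i)) /\
    (forall y : Y, exists s : seq (I * M), y = \sum_(p <- s) g p.1 p.2).

(* The submodule P of X belongs to sigma[M]: P is isomorphic to a submodule
   of an epimorphic image Y of some M^(I), i.e. there is an injective linear
   map from P into such a Y. *)
Definition sigma_sub (A : pzRingType) (M X : lmodType A) (P : X -> Prop) : Prop :=
  exists (Y : lmodType A), epi_image_of_sum M Y /\
    exists h : X -> Y,
      (forall (a : A) (x y : X), P x -> P y -> h (a *: x + y) = a *: h x + h y) /\
      (forall x y : X, P x -> P y -> h x = h y -> x = y).

Definition in_sigma (A : pzRingType) (M N : lmodType A) : Prop :=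
  sigma_sub M (fun _ : N => True).

Definition trace (A : pzRingType) (M N : lmodType A) (x : N) : Prop :=
  exists s : seq N, x = \sum_(y <- s) y /\
    (forall y, y \in s -> exists P : N -> Prop,
        is_submod P /\ sigma_sub M P /\ P y).

(* T^M is exact: it sends every short exact sequence 0 -> N1 -f-> N2 -g-> N3 -> 0
   of left A-modules to a short exact sequence
   0 -> T^M(N1) -> T^M(N2) -> T^M(N3) -> 0 (with the restricted maps). *)
Definition trace_exact (A : pzRingType) (M : lmodType A) : Prop :=
  forall (N1 N2 N3 : lmodType A) (f : N1 -> N2) (g : N2 -> N3),
    is_lin f -> is_lin g -> injective f -> (forall z, exists y, g y = z) ->
    (forall y, g y = 0 <-> exists x, f x = y) ->
    [/\ (forall x, trace M x -> trace M (f x)),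
        (forall y, trace M y -> trace M (g y)),
        (forall x x', trace M x -> trace M x' -> f x = f x' -> x = x'),
        (forall y, trace M y -> (g y = 0 <-> exists x, trace M x /\ f x = y))
      & (forall z, trace M z -> exists y, trace M y /\ g y = z)].

Definition superfluous (A : pzRingType) (X : lmodType A) (K : X -> Prop) : Prop :=
  forall L : X -> Prop, is_submod L ->
    (forall x : X, exists k l, K k /\ L l /\ x = k + l) -> forall x : X, L x.

From HB Require Import structures.
From mathcomp Require Import all_boot all_order all_algebra.
From mathcomp Require Import boolp.
Set Implicit Arguments. Unset Strict Implicit. Unset Printing Implicit Defensive.
Import GRing.Theory.
Local Open Scope ring_scope.

(* Let 0 -> K -> X -> N -> 0 be exact, N in sigma[M], K small in X.
   1. Exactness of T^M makes T^M(X) -> T^M(N) = N onto, so X = K + T^M(X);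
      as K is superfluous and T^M(X) a submodule, T^M(X) = X
      ([trace_full_of_superfluous_epi]).
   2. A module X equal to its trace lies in sigma[M] ([in_sigma_of_trace_full]):
      every submodule P of X in sigma[M] embeds, via some H P, into an
      epimorphic image D P of a direct sum of copies of M.  Gluing X with all
      the D P along the H P (a pushout, built as a quotient of a submodule of
      X x prod_P D P) gives a module W into which X embeds, because the H P are
      injective, and which is generated by the images of the D P, because X is
      the sum of its submodules in sigma[M]; so W is again an epimorphic
      image of a direct sum of copies of M. *)

Definition lin_on (A : pzRingType) (X Y : lmodType A) (P : X -> Prop)
    (h : X -> Y) : Prop :=
  forall (a : A) (x y : X), P x -> P y -> h (a *: x + y) = a *: h x + h y.

Section SubmoduleFacts.
Variables (A : pzRingType) (U : lmodType A) (P : U -> Prop).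
Hypothesis P_sub : is_submod P.

Lemma submod0 : P 0. Proof. by case: P_sub. Qed.

Lemma submodD x y : P x -> P y -> P (x + y).
Proof. by move=> Px Py; have := P_sub.2 1 x y Px Py; rewrite scale1r. Qed.

Lemma submodZ a x : P x -> P (a *: x).
Proof. by move=> Px; have := P_sub.2 a x 0 Px submod0; rewrite addr0. Qed.

Lemma submodB x y : P x -> P y -> P (x - y).
Proof. by move=> Px Py; rewrite -scaleN1r; apply: submodD => //; apply: submodZ. Qed.

Lemma submod_sum (T : Type) (s : seq T) (p : pred T) (u : T -> U) :
  (forall t, p t -> P (u t)) -> P (\sum_(t <- s | p t) u t).
Proof.
move=> Pu; elim: s => [|t s IH]; first by rewrite big_nil; apply: submod0.
by rewrite big_cons; case: ifP => // pt; apply: submodD; auto.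
Qed.

Section LinearOn.
Variables (Y : lmodType A) (h : U -> Y).
Hypothesis h_lin : lin_on P h.

Lemma lin_on0 : h 0 = 0.
Proof.
have := h_lin 1 submod0 submod0; rewrite !scale1r addr0 => h00.
by apply: (addrI (h 0)); rewrite addr0 -h00.
Qed.

Lemma lin_onZ a x : P x -> h (a *: x) = a *: h x.
Proof. by move=> Px; have := h_lin a Px submod0; rewrite !addr0 lin_on0 addr0. Qed.

Lemma lin_onD x y : P x -> P y -> h (x + y) = h x + h y.
Proof. by move=> Px Py; have := h_lin 1 Px Py; rewrite !scale1r. Qed.

Lemma lin_onB x y : P x -> P y -> h (x - y) = h x - h y.
Proof.
move=> Px Py; rewrite -!scaleN1r lin_onD ?lin_onZ //.
by apply: submodZ.
Qed.

Lemma lin_on_sum (T : Type) (s : seq T) (p : pred T) (u : T -> U) :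
  (forall t, p t -> P (u t)) ->
  P (\sum_(t <- s | p t) u t) /\ h (\sum_(t <- s | p t) u t) = \sum_(t <- s | p t) h (u t).
Proof.
move=> Pu; split; first exact: submod_sum.
elim: s => [|t s IH]; first by rewrite !big_nil lin_on0.
by rewrite !big_cons; case: ifP => // pt; rewrite lin_onD ?IH //; [apply: Pu | apply: submod_sum].
Qed.

End LinearOn.
End SubmoduleFacts.

Lemma submodT (A : pzRingType) (U : lmodType A) : is_submod (fun _ : U => True).
Proof. by []. Qed.

Lemma lin_onT (A : pzRingType) (X Y : lmodType A) (f : X -> Y) :
  is_lin f -> lin_on (fun _ => True) f.
Proof. by move=> f_lin a x y _ _; apply: f_lin. Qed.

Section Product.
Variables (A : pzRingType) (I : Type) (F : I -> lmodType A).

Definition dprod := forall i, F i.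
HB.instance Definition _ := gen_eqMixin dprod.
HB.instance Definition _ := gen_choiceMixin dprod.

Definition dzero : dprod := fun i => 0.
Definition dadd (u v : dprod) : dprod := fun i => u i + v i.
Definition dopp (u : dprod) : dprod := fun i => - u i.
Definition dscale (a : A) (u : dprod) : dprod := fun i => a *: u i.

Local Notation ext := functional_extensionality_dep.

Lemma daddA : associative dadd.
Proof. by move=> u v w; apply: ext => i; rewrite /dadd addrA. Qed.
Lemma daddC : commutative dadd.
Proof. by move=> u v; apply: ext => i; rewrite /dadd addrC. Qed.
Lemma dadd0 : left_id dzero dadd.
Proof. by move=> u; apply: ext => i; rewrite /dadd add0r. Qed.
Lemma daddN : left_inverse dzero dopp dadd.
Proof. by move=> u; apply: ext => i; rewrite /dadd addNr. Qed.
HB.instance Definition _ := GRing.isZmodule.Build dprod daddA daddC dadd0 daddN.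

Lemma dscaleA a b u : dscale a (dscale b u) = dscale (a * b) u.
Proof. by apply: ext => i; rewrite /dscale scalerA. Qed.
Lemma dscale1 : left_id 1 dscale.
Proof. by move=> u; apply: ext => i; rewrite /dscale scale1r. Qed.
Lemma dscaleDr : right_distributive dscale +%R.
Proof. by move=> a u v; apply: ext => i; rewrite /dscale /= /dadd scalerDr. Qed.
Lemma dscaleDl u : {morph dscale^~ u : a b / a + b}.
Proof. by move=> a b; apply: ext => i; rewrite /dscale /= /dadd scalerDl. Qed.
HB.instance Definition _ :=
  GRing.Zmodule_isLmodule.Build A dprod dscaleA dscale1 dscaleDr dscaleDl.

Lemma dprod_addE (u v : dprod) i : (u + v) i = u i + v i. Proof. by []. Qed.
Lemma dprod_oppE (u : dprod) i : (- u) i = - u i. Proof. by []. Qed.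
Lemma dprod_scaleE a (u : dprod) i : (a *: u) i = a *: u i. Proof. by []. Qed.

Lemma dprod_sumE (T : Type) (s : seq T) (u : T -> dprod) i :
  (\sum_(t <- s) u t) i = \sum_(t <- s) u t i.
Proof. by elim: s => [|t s IH]; rewrite ?big_nil // !big_cons dprod_addE IH. Qed.

End Product.

(* The type takes the submodule proofs as
   (phantom) arguments so that its module structure can be found by
   canonical-structure inference. *)
Section Quotient.
Variables (A : pzRingType) (U : lmodType A) (S R : U -> Prop).
Hypotheses (S_sub : is_submod S) (R_sub : is_submod R).

Definition coset (u : U) : U -> Prop := fun v => R (v - u).
Definition quotient of is_submod S & is_submod R :=
  {c : U -> Prop | exists u, S u /\ c = coset u}.
Local Notation Q := (quotient S_sub R_sub).
HB.instance Definition _ := gen_eqMixin Q.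
HB.instance Definition _ := gen_choiceMixin Q.

Lemma coset_eq u v : R (u - v) -> coset u = coset v.
Proof.
move=> Ruv; apply: funext => w; apply: propext; rewrite /coset; split => Rw.
- have -> : w - v = (w - u) + (u - v) by rewrite addrA subrK.
  exact: submodD.
- have -> : w - u = (w - v) - (u - v) by rewrite opprB addrA subrK.
  exact: submodB.
Qed.

(* The projection u |-> u + R, defined on all of U (as 0 + R outside S). *)
Definition in_S (u : U) : U := if pselect (S u) then u else 0.
Lemma in_S_mem u : S (in_S u).
Proof. by rewrite /in_S; destruct (pselect (S u)) => //; apply: submod0. Qed.
Lemma in_SE u : S u -> in_S u = u.
Proof. by rewrite /in_S; destruct (pselect (S u)). Qed.

Definition proj (u : U) : Q := exist _ (coset (in_S u)) (ex_intro _ _ (conj (in_S_mem u) erefl)).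

Definition repr (c : Q) : U := proj1_sig (cid (proj2_sig c)).
Lemma repr_mem c : S (repr c). Proof. by case: (proj2_sig (cid (proj2_sig c))). Qed.
Lemma repr_coset c : sval c = coset (repr c).
Proof. by case: (proj2_sig (cid (proj2_sig c))). Qed.

Lemma quotient_eq (c d : Q) : sval c = sval d -> c = d.
Proof. by case: c d => c ? [d ?] /= cd; subst d; congr exist; apply: Prop_irrelevance. Qed.

Lemma proj_congr u v : S u -> S v -> R (u - v) -> proj u = proj v.
Proof. by move=> Su Sv Ruv; apply: quotient_eq; rewrite /= !in_SE //; apply: coset_eq. Qed.

Lemma proj_inj u v : S u -> S v -> proj u = proj v -> R (u - v).
Proof.
move=> Su Sv /(congr1 sval) /=; rewrite !in_SE // => uv.
have : coset u u by rewrite /coset subrr; apply: submod0.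
by rewrite uv.
Qed.

Lemma proj_repr c : proj (repr c) = c.
Proof.
by apply: quotient_eq; rewrite /= in_SE; [rewrite (repr_coset c) | apply: repr_mem].
Qed.

Lemma repr_proj u : S u -> R (repr (proj u) - u).
Proof. by move=> Su; apply: proj_inj => //; rewrite ?proj_repr //; apply: repr_mem. Qed.

Definition qzero : Q := proj 0.
Definition qadd (c d : Q) : Q := proj (repr c + repr d).
Definition qopp (c : Q) : Q := proj (- repr c).
Definition qscale (a : A) (c : Q) : Q := proj (a *: repr c).

Lemma projD u v : S u -> S v -> qadd (proj u) (proj v) = proj (u + v).
Proof.
move=> Su Sv; apply: proj_congr; [apply: submodD => //; apply: repr_mem | exact: submodD |].
by rewrite opprD addrACA; apply: submodD => //; apply: repr_proj.
Qed.
Lemma projZ a u : S u -> qscale a (proj u) = proj (a *: u).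
Proof.
move=> Su; apply: proj_congr; [apply: submodZ => //; apply: repr_mem | exact: submodZ |].
by rewrite -scalerBr; apply: submodZ => //; apply: repr_proj.
Qed.
Lemma projN u : S u -> qopp (proj u) = proj (- u).
Proof. by move=> Su; rewrite -scaleN1r -projZ // /qscale scaleN1r. Qed.

Lemma quotient_ind (P : Q -> Prop) : (forall u, S u -> P (proj u)) -> forall c, P c.
Proof. by move=> Pu c; rewrite -(proj_repr c); apply/Pu/repr_mem. Qed.

Lemma qaddA : associative qadd.
Proof.
elim/quotient_ind=> u Su; elim/quotient_ind=> v Sv; elim/quotient_ind=> w Sw.
by rewrite !projD ?addrA //; apply: submodD.
Qed.
Lemma qaddC : commutative qadd.
Proof. by elim/quotient_ind=> u Su; elim/quotient_ind=> v Sv; rewrite !projD // addrC. Qed.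
Lemma qadd0 : left_id qzero qadd.
Proof. by elim/quotient_ind=> u Su; rewrite /qzero projD ?add0r //; apply: submod0. Qed.
Lemma qaddN : left_inverse qzero qopp qadd.
Proof.
elim/quotient_ind=> u Su; rewrite projN // projD ?addNr //.
by rewrite -scaleN1r; apply: submodZ.
Qed.
HB.instance Definition _ := GRing.isZmodule.Build Q qaddA qaddC qadd0 qaddN.

Lemma qscaleA a b c : qscale a (qscale b c) = qscale (a * b) c.
Proof. by elim/quotient_ind: c => u Su; rewrite !projZ ?scalerA //; apply: submodZ. Qed.
Lemma qscale1 : left_id 1 qscale.
Proof. by elim/quotient_ind=> u Su; rewrite projZ // scale1r. Qed.
Lemma qscaleDr : right_distributive qscale qadd.
Proof.
move=> a; elim/quotient_ind=> u Su; elim/quotient_ind=> v Sv.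
by rewrite projD // !projZ ?projD ?scalerDr //; apply: submodZ || apply: submodD.
Qed.
Lemma qscaleDl c : {morph qscale^~ c : a b / a + b >-> qadd a b}.
Proof.
by elim/quotient_ind: c => u Su a b; rewrite !projZ ?projD ?scalerDl //; apply: submodZ.
Qed.
HB.instance Definition _ :=
  GRing.Zmodule_isLmodule.Build A Q qscaleA qscale1 qscaleDr qscaleDl.

Lemma proj_lin : lin_on S proj.
Proof.
move=> a u v Su Sv.
by rewrite -[_ + proj v]/(qadd (qscale a (proj u)) (proj v)) projZ // projD //; apply: submodZ.
Qed.

End Quotient.

Lemma is_lin_comp (A : pzRingType) (X Y Z : lmodType A) (f : X -> Y) (g : Y -> Z) :
  is_lin f -> is_lin g -> is_lin (g \o f).
Proof. by move=> f_lin g_lin a x y /=; rewrite f_lin g_lin. Qed.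

Section LinearlyGenerated.
Variables (A : pzRingType) (M : lmodType A).

Definition lin_generated (W : lmodType A) (w : W) : Prop :=
  exists s : seq ({phi : M -> W | is_lin phi} * M), w = \sum_(p <- s) sval p.1 p.2.

Lemma lin_generated_sub (W : lmodType A) : is_submod (@lin_generated W).
Proof.
split; first by exists [::]; rewrite big_nil.
move=> a _ _ [s ->] [t ->]; exists ([seq (p.1, a *: p.2) | p <- s] ++ t).
rewrite big_cat big_map scaler_sumr; congr (_ + _); apply: eq_bigr => -[[phi phi_lin] m] _ /=.
by rewrite (lin_onZ (submodT M) (lin_onT phi_lin)).
Qed.

Lemma epi_image_of_lin_generated (W : lmodType A) :
  (forall w : W, lin_generated w) -> epi_image_of_sum M W.
Proof.
move=> W_gen; exists {phi : M -> W | is_lin phi}, (fun phi => sval phi).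
by split; [case | exact: W_gen].
Qed.

Lemma lin_generated_of_epi_image (Y W : lmodType A) (phi : Y -> W) :
  epi_image_of_sum M Y -> is_lin phi -> forall y, lin_generated (phi y).
Proof.
move=> [J [g [g_lin g_onto]]] phi_lin y; have [s ->] := g_onto y.
pose gen (p : J * M) := (exist _ (phi \o g p.1) (is_lin_comp (g_lin p.1) phi_lin), p.2).
exists (map gen s); rewrite big_map.
by have [_ ->] := lin_on_sum (submodT Y) (lin_onT phi_lin) s (p := xpredT)
  (u := fun p => g p.1 p.2) (fun _ _ => I).
Qed.

Lemma epi_image_self : epi_image_of_sum M M.
Proof.
apply: epi_image_of_lin_generated => m.
have id_lin : is_lin (@id M) by [].
by exists [:: (exist _ id id_lin, m)]; rewrite big_seq1.
Qed.

End LinearlyGenerated.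

Definition sigma_submod (A : pzRingType) (M X : lmodType A) (P : X -> Prop) : Prop :=
  is_submod P /\ sigma_sub M P.

(* For each such submodule P fix an embedding
   H P : P -> D P into an epimorphic image of some M^(I), and form the pushout
   W of X and all the D P along the H P:
     W = (elements of X x prod_P D P congruent to finite sums of D-components)
         / (relations (x, - H P x) for x in P). *)
Section Gluing.
Variables (A : pzRingType) (M X : lmodType A).

(* For every P in sigma[M] choose an epimorphic image D P of some M^(I) and
   an embedding H P of P into it (for other P, D P := M is a dummy). *)
Lemma embedding_ex (P : X -> Prop) : exists d : {Y : lmodType A & X -> Y},
  epi_image_of_sum M (projT1 d) /\ (sigma_submod M P ->
    lin_on P (projT2 d) /\
    forall x y, P x -> P y -> projT2 d x = projT2 d y -> x = y).
Proof.
case: (pselect (sigma_submod M P)) => [[_ [Y [Y_epi [h [h_lin h_inj]]]]]|not_sigma].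
  by exists (existT _ Y h).
exists (existT (fun Y : lmodType A => X -> Y) M (fun _ => 0)).
by split=> [|/not_sigma //]; apply: epi_image_self.
Qed.

Definition D (P : X -> Prop) : lmodType A := projT1 (sval (cid (embedding_ex P))).
Definition H (P : X -> Prop) : X -> D P := projT2 (sval (cid (embedding_ex P))).

Lemma D_epi P : epi_image_of_sum M (D P).
Proof. exact: (svalP (cid (embedding_ex P))).1. Qed.
Lemma H_lin P : sigma_submod M P -> lin_on P (H P).
Proof. by move=> SP; case: (svalP (cid (embedding_ex P))).2. Qed.
Lemma H_inj P : sigma_submod M P -> forall x y, P x -> P y -> H P x = H P y -> x = y.
Proof. by move=> SP; case: (svalP (cid (embedding_ex P))).2. Qed.

Definition factor (o : option (X -> Prop)) : lmodType A :=
  if o is Some P then D P else X.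
Definition ambient : lmodType A := dprod factor.

Definition inc (o : option (X -> Prop)) (y : factor o) : ambient :=
  fun o' => if pselect (o = o') is left e then eq_rect o factor y o' e else 0.

Lemma inc_self o (y : factor o) : inc y o = y.
Proof.
by rewrite /inc; case: (pselect (o = o)) => [e|//]; rewrite (Prop_irrelevance e erefl).
Qed.
Lemma inc_other o o' (y : factor o) : o <> o' -> inc y o' = 0.
Proof. by move=> ne; rewrite /inc; case: (pselect (o = o')). Qed.
Lemma inc_lin o : is_lin (@inc o).
Proof.
move=> a y z; apply: functional_extensionality_dep => o'.
rewrite dprod_addE dprod_scaleE /inc; case: (pselect (o = o')) => [e|_]; first by case: o' / e.
by rewrite scaler0 addr0.
Qed.

Local Notation inc_lin_on o := (lin_onT (@inc_lin o)).
Local Notation factorT := (submodT (factor _)).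

Record glue_pair := GluePair {
  gp_sub : X -> Prop; gp_elt : X;
  gp_sigma : sigma_submod M gp_sub; gp_mem : gp_sub gp_elt }.

(* The relation (x, - H P x) identifying x in X with H P x in D P, and the
   submodule of all relations. *)
Definition relator (e : glue_pair) : ambient :=
  @inc None (gp_elt e) - @inc (Some (gp_sub e)) (H (gp_sub e) (gp_elt e)).

Definition relation (u : ambient) : Prop :=
  exists l : seq glue_pair, u = \sum_(e <- l) relator e.

Definition scale_pair (a : A) (e : glue_pair) : glue_pair :=
  GluePair (gp_sigma e) (submodZ (gp_sigma e).1 a (gp_mem e)).

Lemma relatorZ a e : relator (scale_pair a e) = a *: relator e.
Proof.
have He := H_lin (gp_sigma e).
rewrite /relator /= (lin_onZ (gp_sigma e).1 He _ (gp_mem e)).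
by rewrite !(lin_onZ factorT (inc_lin_on _)) // scalerBr.
Qed.

Lemma relation_sub : is_submod relation.
Proof.
split; first by exists [::]; rewrite big_nil.
move=> a _ _ [s ->] [t ->]; exists (map (scale_pair a) s ++ t).
by rewrite big_cat big_map scaler_sumr; congr (_ + _); apply: eq_bigr => e _; rewrite relatorZ.
Qed.

(* If for every submodule Q the H_Q-images of the elements of l attached to Q
   sum to zero, then the elements of l sum to zero: group the summands by
   their submodule and use that each H_Q is injective and linear on Q. *)
Lemma sum_eq0_of_components (l : seq glue_pair) :
  (forall Q, \sum_(e <- l | `[< gp_sub e = Q >]) H Q (gp_elt e) = 0) ->
  \sum_(e <- l) gp_elt e = 0.
Proof.
elim: {l}(size l) {-2}l (leqnn (size l)) => [|n IHn] [|e l] //=; try by rewrite big_nil.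
move=> size_l components.
set Q := gp_sub e; have Q_sigma : sigma_submod M Q := gp_sigma e.
pose onQ t := `[< gp_sub t = Q >].
have inQ t : onQ t -> Q (gp_elt t) by move=> /asboolP <-; apply: gp_mem.
have [sumQ H_sumQ] := lin_on_sum Q_sigma.1 (H_lin Q_sigma) (e :: l) inQ.
rewrite (bigID onQ) /=.
have -> : \sum_(t <- e :: l | onQ t) gp_elt t = 0.
  apply: (H_inj Q_sigma sumQ (submod0 Q_sigma.1)).
  by rewrite H_sumQ components (lin_on0 Q_sigma.1 (H_lin Q_sigma)).
rewrite add0r -big_filter; apply: IHn.
  rewrite /= (_ : onQ e = true) /=; last by apply/asboolP.
  by rewrite size_filter (leq_trans (count_size _ _)).
move=> Q'; rewrite big_filter_cond.
case: (pselect (Q' = Q)) => [->|ne].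
  by rewrite big_pred0 // => t; rewrite /onQ; case: asboolP => //= ->; rewrite asboolT.
rewrite -[RHS](components Q'); apply: eq_bigl => t.
case: (asboolP (gp_sub t = Q')) => [tQ'|_]; last by rewrite andbF.
by rewrite andbT; apply/negP => /asboolP; rewrite tQ'.
Qed.

(* X embeds into the pushout: no nonzero element of the X-coordinate is a
   relation. *)
Lemma relation_incX (z : X) : relation (@inc None z) -> z = 0.
Proof.
move=> [l rel_z].
have -> : z = \sum_(e <- l) gp_elt e.
  have := congr1 (fun u : ambient => u None) rel_z.
  rewrite /= inc_self dprod_sumE => ->; apply: eq_bigr => e _.
  by rewrite /relator dprod_addE dprod_oppE inc_self inc_other // subr0.
apply: sum_eq0_of_components => Q.
have := congr1 (fun u : ambient => u (Some Q)) rel_z.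
rewrite /= inc_other // dprod_sumE => compQ.
apply: (@eq_trans _ _ (- \sum_(e <- l) relator e (Some Q))); last by rewrite -compQ oppr0.
rewrite big_mkcond -sumrN /=; apply: eq_bigr => e _.
rewrite /relator dprod_addE dprod_oppE (inc_other _ (_ : None <> Some Q)) // sub0r opprK.
case: asboolP => [eQ|ne]; first by case: e eQ => P x /= ? ? <-; rewrite inc_self.
by rewrite inc_other // => -[].
Qed.

Definition dsum (l : seq {P : X -> Prop & D P}) : ambient :=
  \sum_(t <- l) @inc (Some (projT1 t)) (projT2 t).

Definition spanned (u : ambient) : Prop := exists l, relation (u - dsum l).

Lemma spanned_sub : is_submod spanned.
Proof.
split; first by exists [::]; rewrite /dsum big_nil subr0; apply: (submod0 relation_sub).
move=> a u v [s rel_s] [t rel_t].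
exists ([seq existT D (projT1 p) (a *: projT2 p) | p <- s] ++ t).
rewrite /dsum big_cat big_map.
under eq_bigr do rewrite (lin_onZ factorT (inc_lin_on _)) //.
rewrite -scaler_sumr opprD addrACA -scalerBr.
exact: relation_sub.2.
Qed.

Lemma spanned_incD P (y : D P) : spanned (@inc (Some P) y).
Proof.
exists [:: existT _ P y]; rewrite /dsum big_seq1 subrr.
exact: (submod0 relation_sub).
Qed.

Lemma spanned_incX_mem P x : sigma_submod M P -> P x -> spanned (@inc None x).
Proof.
move=> P_sigma Px; exists [:: existT _ P (H P x)].
by rewrite /dsum big_seq1; exists [:: GluePair P_sigma Px]; rewrite big_seq1.
Qed.

Definition W : lmodType A := quotient spanned_sub relation_sub.
Definition cls (u : ambient) : W := proj spanned_sub relation_sub u.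
Definition emb (x : X) : W := cls (@inc None x).

Lemma cls_incD_lin P : is_lin (fun y : D P => cls (@inc (Some P) y)).
Proof. by move=> a y z; rewrite /cls inc_lin; apply: proj_lin; apply: spanned_incD. Qed.

Lemma W_generated (w : W) : lin_generated M w.
Proof.
elim/quotient_ind: w => u u_spanned; have [l rel_l] := u_spanned.
have spanned_l : spanned (dsum l) by apply: (submod_sum spanned_sub) => t _; apply: spanned_incD.
rewrite (proj_congr spanned_sub relation_sub u_spanned spanned_l rel_l).
have [_ ->] := lin_on_sum spanned_sub (@proj_lin _ _ _ _ spanned_sub relation_sub) l
  (p := xpredT) (u := fun t => @inc (Some (projT1 t)) (projT2 t)) (fun t _ => spanned_incD _).
apply: (submod_sum (lin_generated_sub M W)) => t _.
exact: (lin_generated_of_epi_image (D_epi _) (@cls_incD_lin (projT1 t))).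
Qed.

(* When X is its own trace, the X-coordinate lies in [spanned] too, so the map
   X -> W is defined, linear, and injective. *)
Section TraceFull.
Hypothesis X_trace : forall x : X, trace M x.

Lemma spanned_incX x : spanned (@inc None x).
Proof.
have [s [-> s_trace]] := X_trace x.
have [_ ->] := lin_on_sum factorT (inc_lin_on None) s (p := xpredT) (u := id) (fun _ _ => I).
rewrite big_seq; apply: (submod_sum spanned_sub) => y /s_trace [P [P_sub [P_sigma Py]]].
exact: (@spanned_incX_mem P).
Qed.

Lemma emb_lin : is_lin emb.
Proof. by move=> a x y; rewrite /emb /cls inc_lin; apply: proj_lin; apply: spanned_incX. Qed.

Lemma emb_inj : injective emb.
Proof.
move=> x y /(proj_inj (spanned_incX x) (spanned_incX y)).
rewrite -(lin_onB factorT (inc_lin_on None)) // => /relation_incX /eqP.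
by rewrite subr_eq0 => /eqP.
Qed.

End TraceFull.
End Gluing.

Lemma in_sigma_of_trace_full (A : pzRingType) (M X : lmodType A) :
  (forall x : X, trace M x) -> in_sigma M X.
Proof.
move=> X_trace; exists (W M X); split.
  by apply: epi_image_of_lin_generated; apply: W_generated.
exists (@emb _ M X); split; first by move=> a x y _ _; apply: emb_lin.
by move=> x y _ _; apply: emb_inj.
Qed.

Lemma trace_sub (A : pzRingType) (M X : lmodType A) : is_submod (@trace A M X).
Proof.
split; first by exists [::]; rewrite big_nil.
move=> a x y [sx [-> x_tr]] [sy [-> y_tr]].
exists ([seq a *: z | z <- sx] ++ sy); split; first by rewrite big_cat big_map scaler_sumr.
move=> z; rewrite mem_cat => /orP [/mapP [z0 z0_sx ->]|]; last exact: y_tr.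
have [P [P_sub [P_sigma Pz0]]] := x_tr z0 z0_sx.
by exists P; split => //; split => //; apply: submodZ.
Qed.

Lemma trace_of_in_sigma (A : pzRingType) (M N : lmodType A) :
  in_sigma M N -> forall z : N, trace M z.
Proof.
move=> N_sigma z; exists [:: z]; split; first by rewrite big_seq1.
by move=> y _; exists (fun _ => True).
Qed.

(* For a superfluous epimorphism g : X -> N with N in sigma[M], exactness of
   T^M makes T^M(X) -> T^M(N) = N onto; so X = ker g + T^M(X), and since
   ker g is superfluous, T^M(X) = X. *)
Lemma trace_full_of_superfluous_epi (A : pzRingType) (M : lmodType A) :
  trace_exact M ->
  forall (K X N : lmodType A) (f : K -> X) (g : X -> N),
    is_lin f -> is_lin g -> injective f -> (forall z, exists y, g y = z) ->
    (forall y, g y = 0 <-> exists k, f k = y) ->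
    in_sigma M N -> superfluous (fun x : X => exists k, f k = x) ->
    forall x : X, trace M x.
Proof.
move=> T_exact K X N f g f_lin g_lin f_inj g_onto exact_fg N_sigma K_small.
have [_ _ _ _ trace_onto] := T_exact K X N f g f_lin g_lin f_inj g_onto exact_fg.
apply: (K_small _ (trace_sub M X)) => x.
have [y [y_tr gy]] := trace_onto (g x) (trace_of_in_sigma N_sigma _).
have [k fk] : exists k, f k = x - y.
  by apply/exact_fg; rewrite (lin_onB (submodT X) (lin_onT g_lin)) // gy subrr.
by exists (f k), y; split; [exists k | rewrite fk subrK].
Qed.

Theorem proposition1p2 (A : pzRingType) (M : lmodType A) :
  trace_exact M ->
  forall (K X N : lmodType A) (f : K -> X) (g : X -> N),
    is_lin f -> is_lin g -> injective f -> (forall z, exists y, g y = z) ->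
    (forall y, g y = 0 <-> exists k, f k = y) ->
    in_sigma M N ->
    superfluous (fun x : X => exists k, f k = x) ->
    in_sigma M X.
Proof.
move=> T_exact K X N f g f_lin g_lin f_inj g_onto exact_fg N_sigma K_small.
apply: in_sigma_of_trace_full.
exact: (trace_full_of_superfluous_epi T_exact f_lin g_lin f_inj g_onto exact_fg N_sigma K_small).
Qed.
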